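(* Let $G$ be a digraph and $i\le 0\le j$ integers. Each of the following properties holds for $G$ if and only if it holds for $G^{[i,j]}$: the Taylor property; the $\operatorname{SD}(\wedge)$ property; having a $2$-semilattice polymorphism; having totally symmetric idempotent polymorphisms of all arities.
   Context: Digraphs are finite and loopless. For $G=(V,E)$, $G^{[i,j]}$ is the digraph on $\{i,\dots,-1\}\cup V\cup\{1,\dots,j\}$ (disjoint union) whose edges are: $u\to w$ for integers $u<w$ in $\{i,\dots,-1,1,\dots,j\}$; the edges of $E$; $u\to v$ for every integer $u<0$ and $v\in V$; $v\to u$ for every $v\in V$ and integer $u>0$. A polymorphism of arity $k$ is a map $f:V^k\to V$ with $(f(a_1,\dots,a_k),f(b_1,\dots,b_k))\in E$ whenever all $(a_i,b_i)\in E$. Weak NU: idempotent polymorphism $w$ of arity $n>1$ with $w(y,x,\dots,x)=w(x,y,x,\dots,x)=\dots=w(x,\dots,x,y)$. Taylor: has a weak NU polymorphism. $\operatorname{SD}(\wedge)$: a $3$-ary weak NU $w_1$ and a $4$-ary weak NU $w_2$ with $w_1(y,x,x)=w_2(y,x,x,x)$. A $2$-semilattice polymorphism is a binary idempotent polymorphism $\cdot$ with $x\cdot y=y\cdot x$ and $x\cdot(x\cdot y)=x\cdot y$. A totally symmetric idempotent polymorphism of arity $n$ is an idempotent $n$-ary polymorphism $p$ with $p(x_1,\dots,x_n)=p(y_1,\dots,y_n)$ whenever $\{x_1,\dots,x_n\}=\{y_1,\dots,y_n\}$. *)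

From mathcomp Require Import all_boot all_order all_algebra.
Set Implicit Arguments. Unset Strict Implicit. Unset Printing Implicit Defensive.
Import Order.TTheory GRing.Theory Num.Theory.

(* A digraph is a finite type V with an edge relation E : rel V
   (looplessness is a separate hypothesis: irreflexive E). *)

(* Vertex set {i,...,-1} ⊎ V ⊎ {1,...,j}, with m = |i| negative integers
   and n = j positive integers.  inl (inl k), k : 'I_m, stands for the
   integer i + k (i.e. -m + k), inr k, k : 'I_n, stands for the integer k+1. *)
Definition ext_vertex (V : finType) (m n : nat) : finType :=
  (('I_m + V) + 'I_n)%type.

Definition ext_rel_nat (V : finType) (E : rel V) (m n : nat)
  : rel (ext_vertex V m n) :=
  fun u w =>
    match u, w with
    | inl (inl a), inl (inl b) => (a < b)%N
    | inl (inl _), inr _ => true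
    | inr a, inr b => (a < b)%N
    | inl (inr x), inl (inr y) => E x y
    | inl (inl _), inl (inr _) => true
    | inl (inr _), inr _ => true
    | _, _ => false
    end.

Arguments ext_rel_nat V E m n : clear implicits.

Definition ext_type (V : finType) (i j : int) : finType :=
  ext_vertex V (absz i) (absz j).
Definition ext_rel (V : finType) (E : rel V) (i j : int) : rel (ext_type V i j) :=
  ext_rel_nat V E (absz i) (absz j).

Section Poly.
Variables (V : finType) (E : rel V).

Definition polymorphism (k : nat) (f : {ffun 'I_k -> V} -> V) : Prop :=
  forall a b : {ffun 'I_k -> V}, (forall t, E (a t) (b t)) -> E (f a) (f b).

Definition idempotent_op (k : nat) (f : {ffun 'I_k -> V} -> V) : Prop :=
  forall x : V, f [ffun => x] = x.

Definition oneoff (k : nat) (s : 'I_k) (x y : V) : {ffun 'I_k -> V} :=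
  [ffun r => if r == s then y else x].

Definition weak_nu (k : nat) (w : {ffun 'I_k -> V} -> V) : Prop :=
  [/\ (1 < k)%N, polymorphism w, idempotent_op w &
      forall (x y : V) (s t : 'I_k), w (oneoff s x y) = w (oneoff t x y)].

Definition taylor : Prop := exists k (w : {ffun 'I_k -> V} -> V), weak_nu w.

Definition SD_meet : Prop :=
  exists (w1 : {ffun 'I_3 -> V} -> V) (w2 : {ffun 'I_4 -> V} -> V),
    [/\ weak_nu w1, weak_nu w2 &
        forall x y : V, w1 (oneoff ord0 x y) = w2 (oneoff ord0 x y)].

Definition two_semilattice_pol (f : V -> V -> V) : Prop :=
  [/\ forall a b a' b', E a b -> E a' b' -> E (f a a') (f b b'),
      forall x, f x x = x,
      forall x y, f x y = f y x &
      forall x y, f x (f x y) = f x y].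

Definition has_two_semilattice : Prop := exists f, two_semilattice_pol f.

Definition tsi_pol (k : nat) (p : {ffun 'I_k -> V} -> V) : Prop :=
  [/\ polymorphism p, idempotent_op p &
      forall a b : {ffun 'I_k -> V},
        [set a s | s in 'I_k] = [set b s | s in 'I_k] -> p a = p b].

Definition has_all_tsi : Prop :=
  forall k : nat, (0 < k)%N -> exists p : {ffun 'I_k -> V} -> V, tsi_pol p.

End Poly.
Arguments ext_rel V E i j : clear implicits.

(* A polymorphism of G lifts to G^[i,j]: on a tuple, return its lowest negative
   entry if there is one, otherwise its highest positive entry, and apply the
   original operation only to tuples lying entirely in G.  The edges from the
   negatives, to the positives, and among the integers are preserved because the
   chosen entry is extremal, and every identity whose two sides involve the
   same set of entries survives, since the chosen entry depends only on that set.
   Conversely, V is exactly the set of vertices that every negative points to and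
   that point to every positive, so an idempotent polymorphism of G^[i,j] maps
   tuples from V into V and restricts to a polymorphism of G. *)

From mathcomp Require Import all_boot all_algebra zify.
Set Implicit Arguments. Unset Strict Implicit. Unset Printing Implicit Defensive.

Section Extension.
Variables (V : finType) (E : rel V) (m n : nat).
Local Notation X := (ext_vertex V m n).
Local Notation R := (ext_rel_nat V E m n).

Definition vx (v : V) : X := inl (inr v).
Definition isV (x : X) : bool := if x is inl (inr _) then true else false.
Definition getV (x : X) (d : V) : V := if x is inl (inr v) then v else d.
Definition vxt k (a : {ffun 'I_k -> V}) : {ffun 'I_k -> X} := [ffun t => vx (a t)].

Lemma vx_inj : injective vx. Proof. by move=> u v []. Qed.

Lemma isV_vx x : isV x -> exists v, x = vx v.
Proof. by case: x => [[a|v]|a] //; exists v. Qed.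

Lemma vxt_oneoff k (s : 'I_k) (x y : V) : vxt (oneoff s x y) = oneoff s (vx x) (vx y).
Proof. by apply/ffunP => r; rewrite !ffunE; case: ifP. Qed.

Lemma vxt_const k (v : V) : vxt [ffun _ : 'I_k => v] = [ffun => vx v].
Proof. by apply/ffunP => t; rewrite !ffunE. Qed.

Lemma imset_vxt k (a : {ffun 'I_k -> V}) :
  [set vxt a t | t in 'I_k] = vx @: [set a t | t in 'I_k].
Proof. by rewrite -imset_comp; apply: eq_imset => t; rewrite ffunE. Qed.

(* Negative vertices come first (increasing), then positive ones (decreasing),
   then all of [V]. *)
Definition key (x : X) : nat :=
  match x with inl (inl a) => a | inl (inr _) => m + n | inr p => m + (n - p.+1) end.

Ltac ord_lia :=
  repeat match goal with
  | o : _ |- _ =>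
    let b := constr:(ltn_ord o) in
    lazymatch goal with _ : is_true (nat_of_ord o < _) |- _ => fail | _ => pose proof b end
  end; lia.

Lemma isV_key x : isV x = (m + n <= key x).
Proof. by case: x => [[a|v]|p] /=; [| rewrite leqnn |]; ord_lia. Qed.

Lemma key_inj x y : ~~ isV x -> key x = key y -> x = y.
Proof.
case: x => [[a|u]|p] //= _; case: y => [[b|v]|q] //= e; try ord_lia.
- by rewrite (val_inj e).
- by rewrite (_ : p = q) //; apply: ord_inj; ord_lia.
Qed.

Lemma edge_neg x y : key x < m -> key x < key y -> R x y.
Proof. by case: x => [[a|u]|p]; case: y => [[b|v]|q] //=; ord_lia. Qed.

Lemma edge_pos x y : m <= key y < m + n -> key y < key x -> R x y.
Proof. by case: x => [[a|u]|p]; case: y => [[b|v]|q] //=; ord_lia. Qed.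

Lemma key_edge_neg x y : R x y -> key y < m -> key x < key y.
Proof. by case: x => [[a|u]|p]; case: y => [[b|v]|q] //=; ord_lia. Qed.

Lemma key_edge_pos x y : R x y -> m <= key x < m + n -> key y < key x.
Proof. by case: x => [[a|u]|p]; case: y => [[b|v]|q] //=; ord_lia. Qed.

Section MinEntry.
Variable k : nat.
Implicit Types (a b : {ffun 'I_k.+1 -> X}) (g : {ffun 'I_k.+1 -> V} -> V).
Local Notation image a := [set a t | t in 'I_k.+1].

Definition min_entry a : X := a [arg min_(t < ord0) key (a t)].

Lemma min_entry_le a t : key (min_entry a) <= key (a t).
Proof. by rewrite /min_entry; case: arg_minnP => // s _; apply. Qed.

Lemma min_entry_mem a : min_entry a \in image a.
Proof. exact: imset_f. Qed.

Lemma min_entry_eq a x :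
  x \in image a -> (forall t, key x <= key (a t)) -> ~~ isV x -> min_entry a = x.
Proof.
case/imsetP => s _ -> le_s nV; apply/esym/key_inj => //.
by apply/eqP; rewrite eqn_leq min_entry_le le_s.
Qed.

Lemma min_entry_nonV a x : x \in image a -> ~~ isV x -> ~~ isV (min_entry a).
Proof.
by case/imsetP=> t _ ->; rewrite !isV_key -!ltnNge; apply: leq_ltn_trans (min_entry_le a t).
Qed.

Lemma min_entry_nonV_set2 a x y :
  image a = [set x; y] -> ~~ (isV x && isV y) -> ~~ isV (min_entry a).
Proof.
by move=> ea; rewrite negb_and => /orP[]; apply: min_entry_nonV; rewrite ea ?set21 ?set22.
Qed.

Lemma min_entry_isV a : isV (min_entry a) -> exists a' : {ffun 'I_k.+1 -> V}, a = vxt a'.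
Proof.
move=> aV; have [v _] := isV_vx aV.
exists [ffun t => getV (a t) v]; apply/ffunP => t; rewrite !ffunE.
have at_a : a t \in image a by apply: imset_f.
by have /isV_vx[u ->] := contraLR (min_entry_nonV at_a) aV.
Qed.

Definition lift g a : X :=
  if min_entry a is inl (inr v) then vx (g [ffun t => getV (a t) v]) else min_entry a.

Lemma lift_vxt g (a' : {ffun 'I_k.+1 -> V}) : lift g (vxt a') = vx (g a').
Proof.
rewrite /lift /min_entry ffunE /=.
by congr (vx (g _)); apply/ffunP => t; rewrite !ffunE.
Qed.

Lemma lift_nonV g a : ~~ isV (min_entry a) -> lift g a = min_entry a.
Proof. by rewrite /lift; case: (min_entry a) => [[]|]. Qed.

Lemma key_lift g a : key (lift g a) = key (min_entry a).
Proof. by rewrite /lift; case: (min_entry a) => [[]|]. Qed.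

End MinEntry.

Lemma lift_polymorphism k (g : {ffun 'I_k.+1 -> V} -> V) :
  polymorphism E g -> polymorphism R (lift g).
Proof.
move=> gP a b ab.
have [sa ea] : exists s, min_entry a = a s by eexists.
have [sb eb] : exists s, min_entry b = b s by eexists.
have neg_lt : key (min_entry b) < m -> key (min_entry a) < key (min_entry b).
  by rewrite eb => ?; apply: leq_ltn_trans (min_entry_le a sb) (key_edge_neg (ab sb) _).
have pos_lt : m <= key (min_entry a) < m + n -> key (min_entry b) < key (min_entry a).
  by rewrite ea => ?; apply: leq_ltn_trans (min_entry_le b sa) (key_edge_pos (ab sa) _).
case: (ltnP (key (min_entry a)) m) => [a_neg|a_nneg].
  by apply: edge_neg; rewrite !key_lift //; move: neg_lt; lia.
case: (ltnP (key (min_entry a)) (m + n)) => [a_pos|a_V].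
  by apply: edge_pos; rewrite !key_lift; move: neg_lt pos_lt; lia.
case: (ltnP (key (min_entry b)) (m + n)) => [b_nV|b_V].
  by apply: edge_pos; rewrite !key_lift; move: neg_lt; lia.
rewrite -!isV_key in a_V b_V.
have [[a' ea'] [b' eb']] := (min_entry_isV a_V, min_entry_isV b_V).
by rewrite ea' eb' !lift_vxt; apply: gP => t; have := ab t; rewrite ea' eb' !ffunE.
Qed.

Lemma min_entry_image k l (a : {ffun 'I_k.+1 -> X}) (b : {ffun 'I_l.+1 -> X}) :
  [set a t | t in 'I_k.+1] = [set b t | t in 'I_l.+1] ->
  ~~ isV (min_entry a) -> min_entry b = min_entry a.
Proof.
move=> eab nV; apply: min_entry_eq => //; first by rewrite -eab min_entry_mem.
move=> t; have /imsetP[s _ ->] : b t \in [set a t | t in 'I_k.+1] by rewrite eab imset_f.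
exact: min_entry_le.
Qed.

Lemma lift_image k l (g1 : {ffun 'I_k.+1 -> V} -> V) (g2 : {ffun 'I_l.+1 -> V} -> V)
    (a : {ffun 'I_k.+1 -> X}) (b : {ffun 'I_l.+1 -> X}) :
  [set a t | t in 'I_k.+1] = [set b t | t in 'I_l.+1] ->
  ~~ isV (min_entry a) -> lift g1 a = lift g2 b.
Proof.
move=> eab nV; have eb := min_entry_image eab nV.
by rewrite !lift_nonV ?eb.
Qed.

Lemma lift_idempotent k (g : {ffun 'I_k.+1 -> V} -> V) :
  (forall v, g [ffun => v] = v) -> forall x, lift g [ffun => x] = x.
Proof.
move=> gI x; have [/isV_vx[v ->]|nV] := boolP (isV x).
  by rewrite -vxt_const lift_vxt gI.
by rewrite lift_nonV /min_entry ffunE.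
Qed.

Lemma image_oneoff (T : finType) k (s : 'I_k.+2) (x y : T) :
  [set oneoff s x y r | r in 'I_k.+2] = [set x; y].
Proof.
have [r rs] : exists r : 'I_k.+2, r != s.
  by case: (eqVneq s ord0) => [->|s0]; [exists ord_max | exists ord0; rewrite eq_sym].
apply/setP => z; rewrite in_set2; apply/imsetP/orP => [[q _ ->]|[]/eqP->].
- by rewrite ffunE; case: ifP; [right | left].
- by exists r; rewrite // ffunE (negbTE rs).
- by exists s; rewrite // ffunE eqxx.
Qed.

Lemma lift_oneoff k l (g1 : {ffun 'I_k.+2 -> V} -> V) (g2 : {ffun 'I_l.+2 -> V} -> V)
    (s : 'I_k.+2) (t : 'I_l.+2) :
  (forall x y : V, g1 (oneoff s x y) = g2 (oneoff t x y)) ->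
  forall x y : X, lift g1 (oneoff s x y) = lift g2 (oneoff t x y).
Proof.
move=> g12 x y; have [/andP[/isV_vx[u ->] /isV_vx[v ->]]|nV] := boolP (isV x && isV y).
  by rewrite -!vxt_oneoff !lift_vxt g12.
by apply: lift_image; rewrite ?(min_entry_nonV_set2 (image_oneoff _ _ _)) // !image_oneoff.
Qed.

Lemma lift_totally_symmetric k (g : {ffun 'I_k.+1 -> V} -> V) :
  (forall a b : {ffun 'I_k.+1 -> V},
     [set a t | t in 'I_k.+1] = [set b t | t in 'I_k.+1] -> g a = g b) ->
  forall a b : {ffun 'I_k.+1 -> X},
     [set a t | t in 'I_k.+1] = [set b t | t in 'I_k.+1] -> lift g a = lift g b.
Proof.
move=> gS a b eab; have [aV|nV] := boolP (isV (min_entry a)); last exact: lift_image.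
have bV : isV (min_entry b).
  by apply: contraT => bnV; move: aV; rewrite (min_entry_image (esym eab) bnV) (negbTE bnV).
have [[a' ea] [b' eb]] := (min_entry_isV aV, min_entry_isV bV).
rewrite ea eb !lift_vxt (gS a' b') //; apply: (imset_inj vx_inj).
by rewrite -!imset_vxt -ea -eb.
Qed.

Definition pair2 (T : Type) (x y : T) : {ffun 'I_2 -> T} :=
  [ffun t => if t == ord0 then x else y].

Lemma image_pair2 (T : finType) (x y : T) : [set pair2 x y t | t in 'I_2] = [set x; y].
Proof.
apply/setP => z; rewrite in_set2; apply/imsetP/orP => [[t _ ->]|[]/eqP->].
- by rewrite ffunE; case: ifP; [left | right].
- by exists ord0; rewrite ?ffunE.
- by exists ord_max; rewrite ?ffunE.
Qed.

Definition lift2 (g : V -> V -> V) (x y : X) : X :=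
  lift (fun b : {ffun 'I_2 -> V} => g (b ord0) (b ord_max)) (pair2 x y).

Lemma lift2_vx g u v : lift2 g (vx u) (vx v) = vx (g u v).
Proof.
rewrite /lift2 (_ : pair2 _ _ = vxt (pair2 u v)) ?lift_vxt ?ffunE //.
by apply/ffunP => t; rewrite !ffunE; case: ifP.
Qed.

Lemma lift2_two_semilattice g :
  two_semilattice_pol E g -> two_semilattice_pol R (lift2 g).
Proof.
case=> gP gI gC gA; split.
- move=> a b a' b' ab ab'; apply: lift_polymorphism => [c d cd|t]; first exact: gP.
  by rewrite !ffunE; case: ifP.
- move=> x; rewrite /lift2 (_ : pair2 x x = [ffun => x]).
    by apply: lift_idempotent => v; rewrite !ffunE gI.
  by apply/ffunP => t; rewrite !ffunE; case: ifP.
- move=> x y; have [/andP[/isV_vx[u ->] /isV_vx[v ->]]|nV] := boolP (isV x && isV y).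
    by rewrite !lift2_vx gC.
  by apply: lift_image; rewrite ?(min_entry_nonV_set2 (image_pair2 _ _)) // !image_pair2 setUC.
- move=> x y; have [/andP[/isV_vx[u ->] /isV_vx[v ->]]|nV] := boolP (isV x && isV y).
    by rewrite !lift2_vx gA.
  have nVxy := min_entry_nonV_set2 (image_pair2 x y) nV.
  have ez : lift2 g x y = min_entry (pair2 x y) by rewrite /lift2 lift_nonV.
  have le_zx : key (lift2 g x y) <= key x.
    by rewrite ez; have := min_entry_le (pair2 x y) ord0; rewrite ffunE.
  have ez' : min_entry (pair2 x (lift2 g x y)) = lift2 g x y.
    apply: min_entry_eq; first by rewrite image_pair2 set22.
      by move=> t; rewrite ffunE; case: ifP.
    by rewrite ez.
  by rewrite {1}/lift2 lift_nonV ez' // ez.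
Qed.

Lemma isV_between y :
  (forall c : 'I_m, R (inl (inl c)) y) -> (forall c : 'I_n, R y (inr c)) -> isV y.
Proof. by case: y => [[c|v]|c] // h1 h2; [have := h1 c | have := h2 c]; rewrite /= ltnn. Qed.

Lemma polymorphism_vxt k (f : {ffun 'I_k -> X} -> X) :
  (forall x, f [ffun => x] = x) -> polymorphism R f -> forall a, isV (f (vxt a)).
Proof.
move=> fI fP a; apply: isV_between => c;
  [rewrite -{1}(fI (inl (inl c))) | rewrite -(fI (inr c))]; by apply: fP => t; rewrite !ffunE.
Qed.

Definition restr k (f : {ffun 'I_k.+1 -> X} -> X) (a : {ffun 'I_k.+1 -> V}) : V :=
  getV (f (vxt a)) (a ord0).

Section Restriction.
Variables (k : nat) (f : {ffun 'I_k.+1 -> X} -> X).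
Hypotheses (fI : forall x, f [ffun => x] = x) (fP : polymorphism R f).

Lemma restr_vx a : vx (restr f a) = f (vxt a).
Proof. by rewrite /restr; have /isV_vx[v ->] := polymorphism_vxt fI fP a. Qed.

Lemma restr_polymorphism : polymorphism E (restr f).
Proof.
move=> a b ab; rewrite -[E _ _]/(R (vx _) (vx _)) !restr_vx.
by apply: fP => t; rewrite !ffunE; apply: ab.
Qed.

Lemma restr_idempotent v : restr f [ffun => v] = v.
Proof. by apply: vx_inj; rewrite restr_vx vxt_const fI. Qed.

Lemma restr_totally_symmetric :
  (forall a b : {ffun 'I_k.+1 -> X},
     [set a t | t in 'I_k.+1] = [set b t | t in 'I_k.+1] -> f a = f b) ->
  forall a b : {ffun 'I_k.+1 -> V},
     [set a t | t in 'I_k.+1] = [set b t | t in 'I_k.+1] -> restr f a = restr f b.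
Proof.
by move=> fS a b eab; apply: vx_inj; rewrite !restr_vx; apply: fS; rewrite !imset_vxt eab.
Qed.

End Restriction.

Lemma restr_oneoff k l (f1 : {ffun 'I_k.+1 -> X} -> X) (f2 : {ffun 'I_l.+1 -> X} -> X)
    (s : 'I_k.+1) (t : 'I_l.+1) :
  (forall x, f1 [ffun => x] = x) -> polymorphism R f1 ->
  (forall x, f2 [ffun => x] = x) -> polymorphism R f2 ->
  (forall x y : X, f1 (oneoff s x y) = f2 (oneoff t x y)) ->
  forall x y : V, restr f1 (oneoff s x y) = restr f2 (oneoff t x y).
Proof.
move=> f1I f1P f2I f2P f12 x y; apply: vx_inj.
by rewrite !restr_vx // !vxt_oneoff.
Qed.

Definition restr2 (f : X -> X -> X) (u v : V) : V := getV (f (vx u) (vx v)) u.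

Lemma restr2_two_semilattice f :
  two_semilattice_pol R f -> two_semilattice_pol E (restr2 f).
Proof.
case=> fP fI fC fA.
have vx_restr2 u v : vx (restr2 f u v) = f (vx u) (vx v).
  have : isV (f (vx u) (vx v)).
    apply: isV_between => c; [rewrite -{1}(fI (inl (inl c))) | rewrite -(fI (inr c))].
      exact: fP.
    exact: fP.
  by rewrite /restr2; case/isV_vx => w ->.
split.
- by move=> a b a' b' ab ab'; rewrite -[E _ _]/(R (vx _) (vx _)) !vx_restr2; apply: fP.
- by move=> x; apply: vx_inj; rewrite vx_restr2 fI.
- by move=> x y; apply: vx_inj; rewrite !vx_restr2 fC.
- by move=> x y; apply: vx_inj; rewrite !vx_restr2 fA.
Qed.

End Extension.

Section Transfer.
Variables (V : finType) (E : rel V) (m n : nat).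
Local Notation R := (ext_rel_nat V E m n).

Lemma weak_nu_lift k (w : {ffun 'I_k.+1 -> V} -> V) :
  weak_nu E w -> weak_nu R (lift w).
Proof.
case: k w => [|k] w [// _ wP wI wS]; split=> //.
- exact: lift_polymorphism.
- exact: lift_idempotent.
- by move=> x y s t; apply: lift_oneoff => u v; apply: wS.
Qed.

Lemma weak_nu_restr k (w : {ffun 'I_k.+1 -> ext_vertex V m n} -> ext_vertex V m n) :
  weak_nu R w -> weak_nu E (restr w).
Proof.
case=> k_gt1 wP wI wS; split=> //.
- exact: restr_polymorphism.
- exact: restr_idempotent wI wP.
- by move=> x y s t; apply: (restr_oneoff wI wP wI wP) => x' y'; apply: wS.
Qed.

Lemma taylor_ext : taylor E <-> taylor R.
Proof.
split=> -[[|k] [w wNU]]; first [by case: wNU | exists k.+1].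
- by exists (lift w); apply: weak_nu_lift.
- by exists (restr w); apply: weak_nu_restr.
Qed.

Lemma SD_meet_ext : SD_meet E <-> SD_meet R.
Proof.
split=> -[w1 [w2 [w1NU w2NU w12]]].
- exists (lift w1), (lift w2); split; [exact: weak_nu_lift | exact: weak_nu_lift |].
  exact: lift_oneoff.
- exists (restr w1), (restr w2); split; [exact: weak_nu_restr | exact: weak_nu_restr |].
  by case: w1NU w2NU => _ w1P w1I _ [_ w2P w2I _]; apply: (restr_oneoff w1I w1P w2I w2P).
Qed.

Lemma has_two_semilattice_ext : has_two_semilattice E <-> has_two_semilattice R.
Proof.
split=> -[f fS].
- by exists (lift2 f); apply: lift2_two_semilattice.
- by exists (restr2 f); apply: restr2_two_semilattice.
Qed.

Lemma has_all_tsi_ext : has_all_tsi E <-> has_all_tsi R.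
Proof.
split=> tsi [//|k] _; have [p [pP pI pS]] := tsi k.+1 isT.
- exists (lift p); split; [exact: lift_polymorphism | exact: lift_idempotent |].
  exact: lift_totally_symmetric.
- exists (restr p); split; [exact: restr_polymorphism | exact: restr_idempotent pI pP |].
  exact: restr_totally_symmetric pI pP pS.
Qed.

End Transfer.

Theorem corollary4p8 (V : finType) (E : rel V) (hE : irreflexive E)
  (i j : int) (hi : (i <= 0)%R) (hj : (0 <= j)%R) :
  [/\ taylor E <-> taylor (ext_rel V E i j),
      SD_meet E <-> SD_meet (ext_rel V E i j),
      has_two_semilattice E <-> has_two_semilattice (ext_rel V E i j) &
      has_all_tsi E <-> has_all_tsi (ext_rel V E i j)].
Proof.
split; [exact: taylor_ext | exact: SD_meet_ext | exact: has_two_semilattice_ext |].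
exact: has_all_tsi_ext.
Qed.
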